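(* In the binary sequential learning model described in the context, with information cascade threshold $k$, let $\tilde u(\varepsilon)=u(\varepsilon)(1-p)+p(1-u(\varepsilon))$ and $\rho(\varepsilon)=\frac{1-\tilde u(\varepsilon)}{\tilde u(\varepsilon)}$. If $\tilde u(\varepsilon)\neq\frac12$, the probability of a correct cascade is $$\mathbb{P}(\text{correct cascade})=\frac{\rho(\varepsilon)^k-1}{\rho(\varepsilon)^{2k}-1}.$$ If $\tilde u(\varepsilon)=\frac12$, an information cascade does not occur.
   Context: Binary model: unknown state $\theta\in\{-1,+1\}$ with uniform prior; agents $n=1,2,\dots$ act in sequence; agent $n$ privately observes $s_n\in\{-1,+1\}$, i.i.d. given $\theta$ with $\mathbb{P}(s_n=\theta\mid\theta)=p\in(1/2,1)$. Before a cascade, agent $n$'s intended action equals her signal and she publicly reports $x_n=a_n$ with probability $1-u(\varepsilon)$ and $x_n=-a_n$ with probability $u(\varepsilon)=\frac{1}{1+e^{\varepsilon}}$, where $\varepsilon>0$ is the privacy budget. The information cascade threshold is $k=\lfloor\log_{\rho(\varepsilon)}\frac{1-p}{p}\rfloor+1$. An information cascade starts at the first agent whose history has (number of $+1$ reports) $-$ (number of $-1$ reports) equal to $\pm k$; from then on all agents take and truthfully report the action favored by the history. It is a correct cascade if that action equals $\theta$. *)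

From HB Require Import structures.
From mathcomp Require Import all_boot all_order all_algebra.
From mathcomp Require Import all_classical all_reals.
From mathcomp Require Import topology normedtype sequences exp.
Set Implicit Arguments. Unset Strict Implicit. Unset Printing Implicit Defensive.
Import Order.TTheory GRing.Theory Num.Theory.
Local Open Scope ring_scope.

Section Model.
Variable R : realType.

(* States / signals / actions in {-1,+1} are encoded as bool: true = +1, false = -1. *)
Definition pm (b : bool) : int := if b then 1 else -1.

Definition u (eps : R) : R := 1 / (1 + expR eps).

Definition ut (p eps : R) : R := u eps * (1 - p) + p * (1 - u eps).

Definition rho (p eps : R) : R := (1 - ut p eps) / ut p eps.

Definition threshold (p eps : R) : int :=
  Num.floor (ln ((1 - p) / p) / ln (rho p eps)) + 1.

(* One agent's randomness (pre-cascade): (signal s_n, flip bit), flip = true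
   means the report is x_n = -a_n = -s_n. *)
Definition agent_weight (p eps : R) (theta : bool) (o : bool * bool) : R :=
  (if o.1 == theta then p else 1 - p) * (if o.2 then u eps else 1 - u eps).

Definition report (o : bool * bool) : int := pm (if o.2 then ~~ o.1 else o.1).

(* Walk along the history: d = (#(+1) reports) - (#(-1) reports) so far. *)
Fixpoint cascade (k d : int) (s : seq (bool * bool)) : option bool :=
  if d == k then Some true
  else if d == - k then Some false
  else match s with
       | [::] => None
       | o :: s' => cascade k (d + report o) s'
       end.

Definition P_correct_by (p eps : R) (N : nat) : R :=
  \sum_(theta : bool) (1 / 2) *
    \sum_(t : N.-tuple (bool * bool))
       (\prod_(o <- t) agent_weight p eps theta o) *
       (if cascade (threshold p eps) 0 t == Some theta then 1 else 0).

Definition P_cascade_by (p eps : R) (N : nat) : R :=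
  \sum_(theta : bool) (1 / 2) *
    \sum_(t : N.-tuple (bool * bool))
       (\prod_(o <- t) agent_weight p eps theta o) *
       (if cascade (threshold p eps) 0 t is Some _ then 1 else 0).

End Model.

From HB Require Import structures.
From mathcomp Require Import all_boot all_order all_algebra.
From mathcomp Require Import all_classical all_reals.
From mathcomp Require Import topology normedtype sequences exp.
From mathcomp Require Import ring lra zify.
Set Implicit Arguments. Unset Strict Implicit. Unset Printing Implicit Defensive.
Import Order.TTheory GRing.Theory Num.Theory.
Import numFieldNormedType.Exports.
Local Open Scope classical_set_scope.
Local Open Scope ring_scope.

(** Write d for the number of reports agreeing with the state minus the number
  of those that do not.  Before a cascade each report agrees with the state
  independently with probability q = ut p eps, so d is a random walk started
  at 0 stepping up with probability q, and a correct cascade is the walk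
  hitting k before -k.  The gambler's ruin function
  h d = (r ^ (d + k) - 1) / (r ^ (2 k) - 1), with r = (1 - q) / q = rho p eps,
  is harmonic for the walk with h k = 1 and h (-k) = 0, so after N steps it
  differs from the probability of having hit k by at most the probability of
  not having left ]-k, k[.  As eps > 0 forces u eps < 1/2, hence q > 1/2
  (which also makes the case ut p eps = 1/2 vacuous), the drift 2 q - 1
  bounds the expected exit time by (k - d) / (2 q - 1), and that survival
  probability is O(1/N). *)

Definition boundary (k d : int) : bool := (d == k) || (d == - k).

Section StoppedWalk.
Variables (R : realType) (q : R) (k : int).

(* [stopped_mean f N d] is E f(X_(min N T)) for the walk X started at d that
   steps up with probability q, T being its hitting time of {-k, k}. *)
Fixpoint stopped_mean (f : int -> R) (N : nat) (d : int) : R :=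
  if boundary k d then f d
  else if N is N'.+1 then
    q * stopped_mean f N' (d + 1) + (1 - q) * stopped_mean f N' (d - 1)
  else f d.

Lemma stopped_mean0 (f : int -> R) (d : int) : stopped_mean f 0 d = f d.
Proof. by rewrite /=; case: ifP. Qed.

Lemma stopped_mean_boundary (f : int -> R) (N : nat) (d : int) :
  boundary k d -> stopped_mean f N d = f d.
Proof. by case: N => [|N] /= ->. Qed.

Lemma stopped_meanS (f : int -> R) (N : nat) (d : int) : ~~ boundary k d ->
  stopped_mean f N.+1 d =
  q * stopped_mean f N (d + 1) + (1 - q) * stopped_mean f N (d - 1).
Proof. by move=> /negbTE /= ->. Qed.

Lemma stopped_meanB (f g : int -> R) (N : nat) (d : int) :
  stopped_mean (fun e => f e - g e) N d =
  stopped_mean f N d - stopped_mean g N d.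
Proof.
elim: N d => [|N IH] d; first by rewrite !stopped_mean0.
have [bd|bd] := boolP (boundary k d); first by rewrite !stopped_mean_boundary.
by rewrite !stopped_meanS // !IH; ring.
Qed.

Lemma stopped_mean_harmonic (f : int -> R) (N : nat) (d : int) :
  (forall e : int, ~~ boundary k e ->
     f e = q * f (e + 1) + (1 - q) * f (e - 1)) ->
  stopped_mean f N d = f d.
Proof.
move=> f_harm; elim: N d => [|N IH] d; first exact: stopped_mean0.
have [bd|bd] := boolP (boundary k d); first exact: stopped_mean_boundary.
by rewrite stopped_meanS // !IH -f_harm.
Qed.

Hypotheses (q_ge0 : 0 <= q) (q_le1 : q <= 1).

Lemma stopped_mean_superharmonic_decr (f : int -> R) (N : nat) (d : int) :
  (forall e : int, ~~ boundary k e ->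
     q * f (e + 1) + (1 - q) * f (e - 1) <= f e) ->
  stopped_mean f N.+1 d <= stopped_mean f N d.
Proof.
have qC_ge0 : 0 <= 1 - q by rewrite subr_ge0.
move=> f_super; elim: N d => [|N IH] d.
  have [bd|bd] := boolP (boundary k d); first by rewrite !stopped_mean_boundary.
  by rewrite stopped_meanS // !stopped_mean0 f_super.
have [bd|bd] := boolP (boundary k d); first by rewrite !stopped_mean_boundary.
rewrite [leLHS]stopped_meanS // [leRHS]stopped_meanS //.
by apply: lerD; apply: ler_wpM2l.
Qed.

Lemma stopped_mean_norm_le (f g : int -> R) (N : nat) (d : int) :
  (forall e : int, - k <= e <= k -> `|f e| <= g e) -> - k <= d <= k ->
  `|stopped_mean f N d| <= stopped_mean g N d.
Proof.
have qC_ge0 : 0 <= 1 - q by rewrite subr_ge0.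
move=> fg; elim: N d => [|N IH] d dk; first by rewrite !stopped_mean0 fg.
have [bd|bd] := boolP (boundary k d).
  by rewrite !stopped_mean_boundary // fg.
have [dS dP] : - k <= d + 1 <= k /\ - k <= d - 1 <= k.
  by move: bd dk; rewrite /boundary; lia.
rewrite !stopped_meanS //; apply: le_trans (ler_normD _ _) _.
rewrite !normrM (ger0_norm q_ge0) (ger0_norm qC_ge0).
by apply: lerD; apply: ler_wpM2l => //; apply: IH.
Qed.

End StoppedWalk.

Section GamblersRuin.
Variables (R : realType) (q : R) (k : int).
Hypotheses (q_gt_half : 1 / 2 < q) (q_lt1 : q < 1) (k_gt0 : 0 < k).

Let q_gt0 : 0 < q. Proof. by move: q_gt_half => ?; lra. Qed.
Let qC_gt0 : 0 < 1 - q. Proof. by move: q_lt1 => ?; lra. Qed.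
Let drift_gt0 : 0 < 2 * q - 1. Proof. by move: q_gt_half => ?; lra. Qed.

Definition hit_top_by (N : nat) (d : int) : R :=
  stopped_mean q k (fun e => (e == k)%:R) N d.

Definition survival (N : nat) (d : int) : R :=
  stopped_mean q k (fun e => (~~ boundary k e)%:R) N d.

Definition odds : R := (1 - q) / q.

Definition top_prob (d : int) : R :=
  (odds ^ (d + k) - 1) / (odds ^ (2 * k) - 1).

Definition exit_time_bound (d : int) : R := (k%:~R - d%:~R) / (2 * q - 1).

Lemma odds_gt0 : 0 < odds.
Proof. by rewrite /odds divr_gt0. Qed.

Lemma odds_lt1 : odds < 1.
Proof. by rewrite /odds ltr_pdivrMr // mul1r; move: q_gt_half => ?; lra. Qed.

Lemma odds_expz_le (a b : int) : 0 <= a -> a <= b -> odds ^ b <= odds ^ a.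
Proof.
move=> a_ge0 ab; apply: (ler_wpiXz2l (ltW odds_gt0) (ltW odds_lt1)) => //.
exact: le_trans ab.
Qed.

Lemma top_prob_denom_lt0 : odds ^ (2 * k) - 1 < 0.
Proof.
rewrite subr_lt0; apply: le_lt_trans odds_lt1.
by rewrite -[leRHS]expr1z odds_expz_le //; lia.
Qed.

Lemma top_prob_top : top_prob k = 1.
Proof.
by rewrite /top_prob -mulr2z -mulrzl divff // lt_eqF // top_prob_denom_lt0.
Qed.

Lemma top_prob_bottom : top_prob (- k) = 0.
Proof. by rewrite /top_prob addNr expr0z subrr mul0r. Qed.

Lemma top_prob_ge0_le1 (d : int) : - k <= d <= k -> 0 <= top_prob d <= 1.
Proof.
move=> /andP[kd dk].
have denom_gt0 : 0 < 1 - odds ^ (2 * k).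
  by rewrite -oppr_lt0 opprB top_prob_denom_lt0.
have num_ge0 : odds ^ (d + k) <= 1.
  by rewrite -(expr0z odds) odds_expz_le //; lia.
have num_le_denom : odds ^ (2 * k) <= odds ^ (d + k).
  by rewrite odds_expz_le //; lia.
rewrite /top_prob -mulrNN -invrN !opprB; apply/andP; split.
  by rewrite divr_ge0 ?(ltW denom_gt0) // subr_ge0.
by rewrite ler_pdivrMr // mul1r lerD2l lerN2.
Qed.

Lemma top_prob_harmonic (d : int) :
  top_prob d = q * top_prob (d + 1) + (1 - q) * top_prob (d - 1).
Proof.
have odds_neq0 : odds != 0 by rewrite gt_eqF // odds_gt0.
have denom_neq0 : odds ^ (2 * k) - 1 != 0.
  by rewrite lt_eqF // top_prob_denom_lt0.
rewrite /top_prob addrAC [d - 1 + k]addrAC; set n := d + k.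
rewrite !expfzDr // expr1z exprN1.
rewrite /odds in denom_neq0 *.
by field; rewrite denom_neq0 !gt_eqF.
Qed.

Lemma exit_time_bound_ge0 (d : int) : d <= k -> 0 <= exit_time_bound d.
Proof. by move=> dk; rewrite divr_ge0 ?(ltW drift_gt0) // subr_ge0 ler_int. Qed.

Lemma survival_decr (N : nat) (d : int) : survival N.+1 d <= survival N d.
Proof.
apply: (stopped_mean_superharmonic_decr (ltW q_gt0) (ltW q_lt1)).
move=> e interior_e.
rewrite interior_e; apply: le_trans (_ : q * 1 + (1 - q) * 1 <= _); last first.
  by rewrite !mulr1 subrKC.
by apply: lerD; apply: ler_wpM2l; rewrite ?(ltW q_gt0) ?(ltW qC_gt0) //;
  case: (boundary k _).
Qed.

Lemma survival_nonincr (n N : nat) (d : int) :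
  (n <= N)%N -> survival N d <= survival n d.
Proof.
apply: (@homo_leq _ (survival ^~ d) (fun x y => y <= x)) => //.
- by move=> x y z yx zy; apply: le_trans zy yx.
- by move=> m; apply: survival_decr.
Qed.

Lemma sum_survival_le (N : nat) (d : int) : - k <= d <= k ->
  \sum_(0 <= n < N) survival n d <= exit_time_bound d.
Proof.
elim: N d => [|N IH] d dk.
  by rewrite big_geq // exit_time_bound_ge0 //; case/andP: dk.
rewrite big_nat_recl // /survival.
have [bd|bd] := boolP (boundary k d).
  under eq_bigr => n _ do rewrite stopped_mean_boundary // bd mulr0n.
  rewrite stopped_mean_boundary // bd mulr0n big1_eq add0r.
  by rewrite exit_time_bound_ge0 //; case/andP: dk.
have [dS dP] : - k <= d + 1 <= k /\ - k <= d - 1 <= k.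
  by move: bd dk; rewrite /boundary; lia.
under eq_bigr => n _ do rewrite stopped_meanS //.
have -> : exit_time_bound d =
    1 + (q * exit_time_bound (d + 1) + (1 - q) * exit_time_bound (d - 1)).
  by rewrite /exit_time_bound !intrD; field; rewrite gt_eqF.
rewrite stopped_mean0 bd big_split -!big_distrr /= lerD2l.
by apply: lerD; apply: ler_wpM2l; rewrite ?(ltW q_gt0) ?(ltW qC_gt0) ?IH.
Qed.

Lemma survival_le (N : nat) (d : int) : - k <= d <= k ->
  N%:R * survival N d <= exit_time_bound d.
Proof.
move=> dk; apply: le_trans (sum_survival_le N dk).
have -> : N%:R * survival N d = \sum_(0 <= n < N) survival N d.
  by rewrite sumr_const_nat subn0 mulr_natl.
by apply: ler_sum_nat => n /andP[_ nN]; apply/survival_nonincr/ltnW.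
Qed.

Lemma hit_top_by_dist (N : nat) (d : int) : - k <= d <= k ->
  `|top_prob d - hit_top_by N d| <= survival N d.
Proof.
move=> dk.
rewrite -(@stopped_mean_harmonic _ q k _ N d (fun e _ => top_prob_harmonic e)).
rewrite /hit_top_by -stopped_meanB.
apply: (stopped_mean_norm_le (ltW q_gt0) (ltW q_lt1)) => // e ek.
rewrite /boundary; case: (e =P k) => [->|_].
  by rewrite top_prob_top subrr normr0.
case: (e =P - k) => [->|_]; first by rewrite top_prob_bottom subrr normr0.
by rewrite subr0 ger0_norm; case/andP: (top_prob_ge0_le1 ek).
Qed.

Lemma hit_top_by_cvg (d : int) : - k <= d <= k ->
  hit_top_by ^~ d @ \oo --> top_prob d.
Proof.
move=> dk; apply/cvgrPdist_le => eps eps_gt0; near=> N.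
have bound_lt : exit_time_bound d / eps < N%:R.
  by near: N; exact: nbhs_infty_gtr.
have bound_ge0 : 0 <= exit_time_bound d / eps.
  by rewrite divr_ge0 ?(ltW eps_gt0) ?exit_time_bound_ge0 //; case/andP: dk.
have N_gt0 : 0 < N%:R :> R := le_lt_trans bound_ge0 bound_lt.
apply: le_trans (hit_top_by_dist N dk) _.
rewrite -(ler_pM2l N_gt0); apply: le_trans (survival_le N dk) _.
by rewrite -ler_pdivrMr // ltW.
Unshelve. all: by end_near.
Qed.

End GamblersRuin.

Lemma sum_tuple0 (T : finType) (V : nmodType) (F : 0.-tuple T -> V) :
  \sum_(t : 0.-tuple T) F t = F [tuple].
Proof.
rewrite (big_pred1 [tuple]) // => t; symmetry; apply/eqP/val_inj.
by case: t => -[].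
Qed.

Lemma sum_tuple_cons (T : finType) (V : nmodType) (N : nat)
    (F : N.+1.-tuple T -> V) :
  \sum_(t : N.+1.-tuple T) F t =
  \sum_(x : T) \sum_(t : N.-tuple T) F [tuple of x :: t].
Proof.
rewrite pair_bigA.
rewrite (reindex (fun xt : T * N.-tuple T => [tuple of xt.1 :: xt.2])) //=.
exists (fun t => (thead t, [tuple of behead t])) => [[x t] _|t _] /=.
  by rewrite theadE; congr pair; apply: val_inj.
by rewrite [RHS]tuple_eta.
Qed.

Section ProductWeights.
Variables (T : finType) (R : pzSemiRingType) (w : T -> R).

Lemma sum_prod_tuple_cons (N : nat) (F : seq T -> R) :
  \sum_(t : N.+1.-tuple T) (\prod_(o <- t) w o) * F t =
  \sum_(x : T) w x * \sum_(t : N.-tuple T) (\prod_(o <- t) w o) * F (x :: t).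
Proof.
rewrite sum_tuple_cons; apply: eq_bigr => x _; rewrite big_distrr.
by apply: eq_bigr => t _; rewrite big_cons -mulrA.
Qed.

Lemma sum_prod_tuple (N : nat) :
  \sum_(t : N.-tuple T) \prod_(o <- t) w o = (\sum_(x : T) w x) ^+ N.
Proof.
elim: N => [|N IH]; first by rewrite sum_tuple0 big_nil expr0.
rewrite sum_tuple_cons exprS -IH big_distrl; apply: eq_bigr => x _.
by rewrite big_distrr; apply: eq_bigr => t _; rewrite big_cons.
Qed.

End ProductWeights.

Lemma cascade_boundary (k d : int) (s : seq (bool * bool)) :
  boundary k d -> cascade k d s = Some (d == k).
Proof.
have -> : cascade k d s =
    if d == k then Some true else if d == - k then Some false
    else if s is o :: s' then cascade k (d + report o) s' else None.
  by case: s.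
by rewrite /boundary; case: (d == k) => //= ->.
Qed.

Lemma cascade_nil (k d : int) : ~~ boundary k d -> cascade k d [::] = None.
Proof. by rewrite /boundary negb_or => /andP[/negbTE /= -> /negbTE ->]. Qed.

Lemma cascade_cons (k d : int) (o : bool * bool) (s : seq (bool * bool)) :
  ~~ boundary k d -> cascade k d (o :: s) = cascade k (d + report o) s.
Proof. by rewrite /boundary negb_or => /andP[/negbTE /= -> /negbTE ->]. Qed.

Lemma boundary_pm (th : bool) (k d : int) :
  boundary k (pm th * d) = boundary k d.
Proof.
by case: th; rewrite /pm ?mul1r ?mulN1r /boundary // !eqr_oppLR opprK orbC.
Qed.

Lemma cascade_hit_top (th : bool) (k d : int) : 0 < k -> boundary k d ->
  (Some (d == k) == Some th) = (pm th * d == k).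
Proof.
move=> k_gt0 /orP[] /eqP ->; have nk : (- k == k) = false by apply/eqP; lia.
  by case: th; rewrite /pm ?mul1r ?mulN1r ?eqxx ?nk.
by case: th; rewrite /pm ?mul1r ?mulN1r ?opprK ?eqxx ?nk.
Qed.

Section CascadeWalk.
Variables (R : realType) (p eps : R).

Lemma report_toward_truth (th : bool) (F : int -> R) :
  \sum_(o : bool * bool) agent_weight p eps th o * F (pm th * report o) =
  ut p eps * F 1 + (1 - ut p eps) * F (-1).
Proof.
rewrite -(pair_bigA _ (fun a b =>
  agent_weight p eps th (a, b) * F (pm th * report (a, b)))).
rewrite !big_bool /agent_weight /report /ut /pm /=.
by case: th; rewrite /= ?mulr1 ?mul1r ?mulrN1 ?opprK; ring.
Qed.

Lemma agent_weight_sum (th : bool) :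
  \sum_(o : bool * bool) agent_weight p eps th o = 1.
Proof.
have := report_toward_truth th (fun _ => 1); rewrite !mulr1 subrKC => <-.
by apply: eq_bigr => o _; rewrite mulr1.
Qed.

Definition correct_cascade_by (th : bool) (k d : int) (N : nat) : R :=
  \sum_(t : N.-tuple (bool * bool))
     (\prod_(o <- t) agent_weight p eps th o) *
     (if cascade k d t == Some th then 1 else 0).

Lemma correct_cascade_by_boundary (th : bool) (k d : int) (N : nat) :
  0 < k -> boundary k d -> correct_cascade_by th k d N = (pm th * d == k)%:R.
Proof.
move=> k_gt0 bd; rewrite /correct_cascade_by.
under eq_bigr => t _ do rewrite cascade_boundary // cascade_hit_top //.
rewrite -big_distrl /= sum_prod_tuple agent_weight_sum expr1n mul1r.
by case: (_ == _).
Qed.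

Lemma correct_cascade_byE (th : bool) (k d : int) (N : nat) : 0 < k ->
  correct_cascade_by th k d N = hit_top_by (ut p eps) k N (pm th * d).
Proof.
move=> k_gt0; elim: N d => [|N IH] d; (have [bd|bd] := boolP (boundary k d);
  first by rewrite correct_cascade_by_boundary // /hit_top_by
                   stopped_mean_boundary ?boundary_pm).
- rewrite /correct_cascade_by sum_tuple0 big_nil mul1r cascade_nil //.
  rewrite /hit_top_by stopped_mean0.
  by move: bd; rewrite -(boundary_pm th) negb_or => /andP[/negbTE ->].
rewrite /correct_cascade_by.
rewrite (sum_prod_tuple_cons _ N
  (fun s => if cascade k d s == Some th then 1 else 0)).
under eq_bigr => o _ do under eq_bigr => t _ do rewrite cascade_cons //.
under eq_bigr => o _ do
  rewrite -/(correct_cascade_by th k (d + report o) N) IH mulrDr.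
rewrite (report_toward_truth th
  (fun r => hit_top_by (ut p eps) k N (pm th * d + r))).
by rewrite [RHS]/hit_top_by stopped_meanS ?boundary_pm.
Qed.

Lemma u_lt_half : 0 < eps -> u eps < 1 / 2.
Proof.
move=> eps_gt0; have e_gt1 := pexpR_gt1 eps_gt0.
by rewrite /u ltr_pdivrMr; lra.
Qed.

Lemma u_gt0 : 0 < u eps.
Proof. by rewrite /u divr_gt0 // ltr_wpDr // expR_ge0. Qed.

Lemma ut_gt_half : 1 / 2 < p -> 0 < eps -> 1 / 2 < ut p eps.
Proof.
move=> p_gt_half /u_lt_half u_lt_half.
have : 0 < (p - 1 / 2) * (1 - 2 * u eps) by rewrite mulr_gt0 //; lra.
by rewrite /ut; lra.
Qed.

Lemma ut_lt1 : 0 < p -> p < 1 -> 0 < eps -> ut p eps < 1.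
Proof.
move=> p_gt0 p_lt1 /u_lt_half u_lt_half; have := u_gt0.
have : 0 < (1 - p) * (1 - u eps) by rewrite mulr_gt0 //; lra.
by rewrite /ut; nra.
Qed.

Lemma threshold_gt0 : 1 / 2 < p -> p < 1 -> 0 < eps -> 0 < threshold p eps.
Proof.
move=> p_gt_half p_lt1 eps_gt0.
have p_odds : 0 < (1 - p) / p < 1 by rewrite divr_gt0 ?ltr_pdivrMr /=; lra.
have ut_odds : 0 < rho p eps < 1.
  by rewrite odds_gt0 ?odds_lt1 ?ut_gt_half ?ut_lt1 //; lra.
rewrite /threshold ltr_wpDl // floor_ge0 -mulrNN -invrN.
by rewrite divr_ge0 // oppr_ge0 ltW // ln_lt0.
Qed.

Lemma P_correct_byE (N : nat) : 0 < threshold p eps ->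
  P_correct_by p eps N = hit_top_by (ut p eps) (threshold p eps) N 0.
Proof.
move=> k_gt0; rewrite /P_correct_by big_bool /= -!/(correct_cascade_by _ _ _ _).
by rewrite !correct_cascade_byE // mulr0; lra.
Qed.

End CascadeWalk.

Theorem lemma2 (R : realType) (p eps : R) :
  1 / 2 < p -> p < 1 -> 0 < eps ->
  (ut p eps != 1 / 2 ->
     P_correct_by p eps @ \oo -->
       (rho p eps ^ threshold p eps - 1) /
       (rho p eps ^ (2 * threshold p eps) - 1))
  /\
  (ut p eps = 1 / 2 -> forall N, P_cascade_by p eps N = 0).
Proof.
move=> p_gt_half p_lt1 eps_gt0.
have ut_gt := ut_gt_half p_gt_half eps_gt0.
split=> [_|ut_half]; last by move: ut_gt; rewrite ut_half ltxx.
have k_gt0 := threshold_gt0 p_gt_half p_lt1 eps_gt0.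
have p_gt0 : 0 < p by lra.
have ut_lt := ut_lt1 p_gt0 p_lt1 eps_gt0.
have -> : P_correct_by p eps = hit_top_by (ut p eps) (threshold p eps) ^~ 0.
  by apply/funext => N; apply: P_correct_byE.
have zero_in : - threshold p eps <= 0 <= threshold p eps.
  by rewrite oppr_le0 ltW.
by have := hit_top_by_cvg ut_gt ut_lt k_gt0 zero_in; rewrite /top_prob add0r.
Qed.
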